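(* Let $j\ge2$ be an integer and $\lambda>0$. For every integer $n\ge\max\{\lceil\lambda^{-1}\rceil,\,j-2\}$ we have $$\lambda_{n,j}(\lambda)\ge\frac{\lambda}{(1+\lambda)^{j-1}}.$$ Moreover, $$\lim_{n\to\infty}\widehat\lambda_{n,j-1}(\lambda)=\lim_{n\to\infty}\lambda_{n,j}(\lambda)=\frac{\lambda}{(1+\lambda)^{j-1}}.$$
   Context: For an integer $n\ge1$ let $f_n(x)=(1+x)^{n+1}/x$ for $x>0$. The function $f_n$ is strictly decreasing on $(0,1/n]$ and strictly increasing on $[1/n,\infty)$. Regular graph exponents (Schmidt–Summerer), defined algebraically. For $\lambda\in[1/n,\infty)$ let $\mu\in(0,1/n]$ be the unique solution of $f_n(\mu)=f_n(\lambda)$, and set $$\lambda_{n,j}(\lambda)=\lambda^{1-\frac{j-1}{n+1}}\mu^{\frac{j-1}{n+1}},\qquad 1\le j\le n+2 .$$ Thus $\lambda_{n,1}=\lambda$, $\lambda_{n,n+2}=\mu$, and all ratios $\lambda_{n,j}/\lambda_{n,j+1}$ are equal. For $\lambda=\infty$ put $\lambda_{n,1}=\infty$, $\lambda_{n,2}=1$ and $\lambda_{n,j}=0$ for $j\ge3$. Put $\widehat\lambda_{n,j}(\lambda):=\lambda_{n,j+1}(\lambda)$ for $1\le j\le n+1$, and $\widehat\lambda_n(\lambda):=\lambda_{n,2}(\lambda)$. These are the exponents of the regular graph in dimension $n$ with parameter $\lambda_n=\lambda$. *)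

From Stdlib Require Import Reals Lra Lia ClassicalEpsilon.
Open Scope R_scope.

Definition fn (n : nat) (x : R) : R := (1 + x) ^ (S n) / x.

(* mu_n(lambda): the unique mu in (0, 1/n] with f_n(mu) = f_n(lambda)
   (for lambda >= 1/n); chosen via Hilbert's epsilon. *)
Definition mu_n (n : nat) (lam : R) : R :=
  epsilon (inhabits 0)
    (fun m => 0 < m /\ m <= / INR n /\ fn n m = fn n lam).

Definition lambda_nj (n j : nat) (lam : R) : R :=
  Rpower lam (1 - (INR j - 1) / (INR n + 1)) *
  Rpower (mu_n n lam) ((INR j - 1) / (INR n + 1)).

Definition hat_lambda_nj (n j : nat) (lam : R) : R := lambda_nj n (S j) lam.

(* The consecutive ratios of the regular graph exponents all equal
   (lambda/mu)^(1/(n+1)), and f_n(mu) = f_n(lambda) says precisely that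
   lambda/mu = ((1+lambda)/(1+mu))^(n+1).  Hence
   lambda_{n,j} = lambda ((1+mu)/(1+lambda))^(j-1), which exceeds
   lambda/(1+lambda)^(j-1) because mu > 0 and tends to it because
   0 < mu <= 1/n. *)
From Stdlib Require Import Reals Lra Lia ClassicalEpsilon.
Open Scope R_scope.

Lemma bernoulli_ineq (h : R) (k : nat) : -1 <= h -> 1 + INR k * h <= (1 + h) ^ k.
Proof.
  intros Hh; induction k as [|k IH]; [simpl; lra|].
  rewrite S_INR; simpl.
  assert (0 <= INR k) by apply pos_INR.
  assert ((1 + h) * (1 + INR k * h) <= (1 + h) * (1 + h) ^ k)
    by (apply Rmult_le_compat_l; lra).
  nra.
Qed.

Lemma fn_inv_le (n : nat) (lam : R) : (1 <= n)%nat -> 0 < lam ->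
  fn n (/ INR n) <= fn n lam.
Proof.
  intros Hn Hl.
  assert (HN : 1 <= INR n) by (apply (le_INR 1); lia).
  unfold fn; set (N := INR n) in *.
  (* Factor 1 + lam = t (1 + 1/N); Bernoulli then gives t^(n+1) >= N lam. *)
  set (t := N * (1 + lam) / (N + 1)).
  assert (Ht : 0 < t) by (unfold t; apply Rdiv_lt_0_compat; nra).
  assert (Hbern : N * lam <= t ^ S n).
  { replace (N * lam) with (1 + INR (S n) * (t - 1))
      by (rewrite S_INR; fold N; unfold t; field; lra).
    replace t with (1 + (t - 1)) at 2 by ring.
    apply bernoulli_ineq; lra. }
  replace (1 + lam) with (t * (1 + / N)) by (unfold t; field; lra).
  rewrite Rpow_mult_distr.
  assert (HA : 0 < (1 + / N) ^ S n)
    by (apply pow_lt; assert (0 < / N) by (apply Rinv_0_lt_compat; lra); lra).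
  set (A := (1 + / N) ^ S n) in *.
  replace (A / / N) with (N * lam * A / lam) by (field; lra).
  apply Rmult_le_compat_r; [left; apply Rinv_0_lt_compat; lra|].
  apply Rmult_le_compat_r; lra.
Qed.

Lemma fn_level_attained_le_inv (n : nat) (lam : R) : (1 <= n)%nat -> 0 < lam ->
  exists m, 0 < m /\ m <= / INR n /\ fn n m = fn n lam.
Proof.
  intros Hn Hl.
  assert (HN : 1 <= INR n) by (apply (le_INR 1); lia).
  assert (Hpos : 0 < / INR n) by (apply Rinv_0_lt_compat; lra).
  set (c := fn n lam).
  set (g := fun x => (1 + x) ^ S n - c * x).
  assert (Hg : continuity g) by (unfold g; intro; reg).
  assert (g0 : g 0 = 1) by (unfold g; rewrite Rplus_0_r, pow1; ring).
  assert (g1 : g (/ INR n) <= 0).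
  { pose proof (fn_inv_le n lam Hn Hl) as Hmin.
    unfold fn at 1 in Hmin; fold c in Hmin; unfold g.
    apply (Rmult_le_compat_r (/ INR n)) in Hmin; [|lra].
    replace ((1 + / INR n) ^ S n / / INR n * / INR n) with ((1 + / INR n) ^ S n)
      in Hmin by (field; lra).
    lra. }
  destruct (IVT_cor g 0 (/ INR n) Hg ltac:(lra) ltac:(rewrite g0; lra))
    as [z [[Hz0 Hz1] Hgz]].
  assert (z <> 0) by (intro E; subst z; lra).
  exists z; repeat split; try lra.
  unfold g in Hgz; unfold fn; fold c.
  apply (Rmult_eq_reg_r z); [field_simplify; lra | lra].
Qed.

Lemma INR_ge_inv_pos (n : nat) (lam : R) : 0 < lam -> / lam <= INR n -> (1 <= n)%nat.
Proof.
  intros Hl Hn; destruct n; [|lia].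
  simpl in Hn; assert (0 < / lam) by (apply Rinv_0_lt_compat; lra); lra.
Qed.

Lemma mu_n_spec (n : nat) (lam : R) : 0 < lam -> / lam <= INR n ->
  0 < mu_n n lam /\ mu_n n lam <= / INR n /\ fn n (mu_n n lam) = fn n lam.
Proof.
  intros Hl Hn; unfold mu_n.
  apply (epsilon_spec (inhabits 0) (fun m => 0 < m /\ m <= / INR n /\ fn n m = fn n lam)).
  exact (fn_level_attained_le_inv n lam (INR_ge_inv_pos n lam Hl Hn) Hl).
Qed.

Lemma fn_eq_geometric (n : nat) (lam m : R) : 0 < lam -> 0 < m ->
  fn n m = fn n lam -> m = lam * ((1 + m) / (1 + lam)) ^ S n.
Proof.
  intros Hl Hm Hf; unfold fn in Hf.
  assert (0 < (1 + lam) ^ S n) by (apply pow_lt; lra).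
  unfold Rdiv; rewrite Rpow_mult_distr, pow_inv.
  replace ((1 + m) ^ S n) with (m * ((1 + lam) ^ S n / lam))
    by (rewrite <- Hf; field; lra).
  field; lra.
Qed.

Lemma Rpower_geometric_interp (n k : nat) (lam r : R) : 0 < lam -> 0 < r ->
  Rpower lam (1 - INR k / (INR n + 1)) * Rpower (lam * r ^ S n) (INR k / (INR n + 1))
  = lam * r ^ k.
Proof.
  intros Hl Hr.
  assert (Hrn : 0 < r ^ S n) by (apply pow_lt; lra).
  rewrite <- Rpower_mult_distr, <- Rmult_assoc, <- Rpower_plus by lra.
  replace (1 - INR k / (INR n + 1) + INR k / (INR n + 1)) with 1 by ring.
  rewrite Rpower_1 by lra; f_equal.
  rewrite <- (Rpower_pow (S n) r Hr), Rpower_mult, <- Rpower_pow by lra.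
  f_equal; rewrite S_INR; field; pose proof (pos_INR n); lra.
Qed.

Lemma lambda_nj_eq (n j : nat) (lam : R) : (1 <= j)%nat -> 0 < lam -> / lam <= INR n ->
  lambda_nj n j lam = lam * ((1 + mu_n n lam) / (1 + lam)) ^ (j - 1).
Proof.
  intros Hj Hl Hn.
  destruct (mu_n_spec n lam Hl Hn) as [Hmu [_ Hf]].
  unfold lambda_nj.
  replace (INR j - 1) with (INR (j - 1)) by (rewrite minus_INR by lia; reflexivity).
  set (m := mu_n n lam) in *.
  assert (Hr : 0 < (1 + m) / (1 + lam)) by (apply Rdiv_lt_0_compat; lra).
  rewrite <- (Rpower_geometric_interp n (j - 1) lam _ Hl Hr).
  rewrite <- (fn_eq_geometric n lam m Hl Hmu Hf).
  reflexivity.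
Qed.

Lemma geometric_ratio_lower_bound (k : nat) (lam m : R) : 0 < lam -> 0 <= m ->
  lam / (1 + lam) ^ k <= lam * ((1 + m) / (1 + lam)) ^ k.
Proof.
  intros Hl Hm.
  unfold Rdiv at 1; rewrite <- pow_inv.
  apply Rmult_le_compat_l; [lra|].
  assert (0 < / (1 + lam)) by (apply Rinv_0_lt_compat; lra).
  apply pow_incr; split; [lra|].
  unfold Rdiv; rewrite <- (Rmult_1_l (/ (1 + lam))) at 1.
  apply Rmult_le_compat_r; lra.
Qed.

Lemma mu_n_cv0 (lam : R) : 0 < lam -> Un_cv (fun n => mu_n n lam) 0.
Proof.
  intros Hl eps He.
  assert (0 < / eps) by (apply Rinv_0_lt_compat; lra).
  assert (0 < / lam) by (apply Rinv_0_lt_compat; lra).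
  destruct (INR_unbounded (/ eps + / lam)) as [N HN].
  exists N; intros n Hn.
  assert (INR N <= INR n) by (apply le_INR; lia).
  destruct (mu_n_spec n lam Hl ltac:(lra)) as [Hmu [Hmu_le _]].
  unfold R_dist; rewrite Rminus_0_r, Rabs_pos_eq by lra.
  assert (/ INR n < eps).
  { replace eps with (/ / eps) by (field; lra).
    apply Rinv_lt_contravar; nra. }
  lra.
Qed.

Lemma Un_cv_eventually_ext (u v : nat -> R) (l : R) :
  (exists N, forall n, (N <= n)%nat -> v n = u n) -> Un_cv u l -> Un_cv v l.
Proof.
  intros [N HN] Hu eps He; destruct (Hu eps He) as [M HM].
  exists (max N M); intros n Hn; rewrite HN by lia; apply HM; lia.
Qed.

Lemma lambda_nj_cv (j : nat) (lam : R) : (1 <= j)%nat -> 0 < lam ->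
  Un_cv (fun n => lambda_nj n j lam) (lam / (1 + lam) ^ (j - 1)).
Proof.
  intros Hj Hl.
  set (h := fun x => lam * ((1 + x) / (1 + lam)) ^ (j - 1)).
  assert (Hh0 : h 0 = lam / (1 + lam) ^ (j - 1)).
  { unfold h; rewrite Rplus_0_r; unfold Rdiv; rewrite Rmult_1_l, pow_inv; ring. }
  rewrite <- Hh0.
  apply (Un_cv_eventually_ext (fun n => h (mu_n n lam))).
  - destruct (INR_unbounded (/ lam)) as [N HN]; exists N; intros n Hn.
    assert (INR N <= INR n) by (apply le_INR; lia).
    apply lambda_nj_eq; lra || lia.
  - apply continuity_seq; [unfold h; reg; lra | exact (mu_n_cv0 lam Hl)].
Qed.

(* The hypothesis j <= n + 2 only makes the index j meaningful in the paper;
   the closed form of [lambda_nj_eq] holds without it. *)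
Theorem corollary2p3 (j : nat) (lam : R) :
  (2 <= j)%nat -> 0 < lam ->
  (forall n : nat, / lam <= INR n -> (j <= n + 2)%nat ->
     lambda_nj n j lam >= lam / (1 + lam) ^ (j - 1)) /\
  Un_cv (fun n => hat_lambda_nj n (j - 1) lam) (lam / (1 + lam) ^ (j - 1)) /\
  Un_cv (fun n => lambda_nj n j lam) (lam / (1 + lam) ^ (j - 1)).
Proof.
  intros Hj Hl.
  assert (Hcv := lambda_nj_cv j lam ltac:(lia) Hl).
  split; [|split; [|exact Hcv]].
  - intros n Hn _.
    rewrite lambda_nj_eq by (lia || lra).
    destruct (mu_n_spec n lam Hl Hn) as [Hmu _].
    apply Rle_ge, geometric_ratio_lower_bound; lra.
  - unfold hat_lambda_nj; replace (S (j - 1)) with j by lia; exact Hcv.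
Qed.
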